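(* Let $\{u_n\}_{n\in\mathbb{N}}$ be a Hamel basis of a vector space $E$ and $\{f_n\}_{n\in\mathbb{N}}$ a linearly independent sequence of linear functionals on $E$ separating the points of $E$. Then there exist bijections $\alpha,\beta:\mathbb{N}\to\mathbb{N}$ such that for every $n\in\mathbb{N}$ the matrix $\{f_{\alpha(j)}(u_{\beta(k)})\}_{1\le j,k\le n}$ is invertible. Furthermore, there exist scalars $c_{j,k}\in\mathbb{K}$ for $j\le k$ such that $c_{j,j}\neq0$ for all $j$, and, setting $v_k=\sum_{m=1}^k c_{m,k}u_{\beta(m)}$, one has $f_{\alpha(j)}(v_j)=1$ for all $j\in\mathbb{N}$ and $f_{\alpha(j)}(v_k)=0$ for all $j,k\in\mathbb{N}$ with $j<k$.
   Context: Vector spaces are over $\mathbb{K}\in\{\mathbb{R},\mathbb{C}\}$. *)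

From HB Require Import structures.
From mathcomp Require Import all_boot all_order all_algebra.
Set Implicit Arguments. Unset Strict Implicit. Unset Printing Implicit Defensive.
Import Order.TTheory GRing.Theory Num.Theory.
Local Open Scope ring_scope.

Definition linear_functional (K : fieldType) (E : lmodType K) (f : E -> K) : Prop :=
  forall (a : K) (x y : E), f (a *: x + y) = a * f x + f y.

Definition hamel_basis (K : fieldType) (E : lmodType K) (u : nat -> E) : Prop :=
  (forall (n : nat) (c : nat -> K),
      \sum_(i < n) c i *: u i = 0 -> forall i : nat, (i < n)%N -> c i = 0)
  /\ (forall x : E, exists (n : nat) (c : nat -> K), x = \sum_(i < n) c i *: u i).

Definition lin_indep_functionals (K : fieldType) (E : lmodType K)
    (f : nat -> E -> K) : Prop :=
  forall (n : nat) (c : nat -> K),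
    (forall x : E, \sum_(i < n) c i * f i x = 0) ->
    forall i : nat, (i < n)%N -> c i = 0.

Definition separates_points (K : fieldType) (E : lmodType K)
    (f : nat -> E -> K) : Prop :=
  forall x y : E, x <> y -> exists n : nat, f n x <> f n y.

(* Call two duplicate-free index lists sa, sb of common length n admissible when
   the matrix (f_(sa_j) (u_(sb_k)))_(j,k<n) is invertible.  The key fact is that
   an admissible pair can be extended by any new functional index a (a matching
   new vector index exists because the f_n are independent and the u_n span E),
   and by any new vector index b (a matching functional index exists because the
   u_n are independent and the f_n separate points); in both cases the bordered
   matrix is invertible as soon as a Schur-complement scalar is nonzero.  Adding
   alternately the least unused functional index and the least unused vector
   index yields enumerations alpha, beta of nat with all leading matrices
   invertible.  The coefficients c_(.,k) form the last column of the inverse of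
   the (k+1)-th leading matrix; c_(k,k) <> 0 since the k-th one is invertible. *)

From HB Require Import structures.
From mathcomp Require Import all_boot all_order all_algebra.
From Stdlib Require Import Classical.
Set Implicit Arguments.
Unset Strict Implicit.
Unset Printing Implicit Defensive.
Import Order.TTheory GRing.Theory Num.Theory.
Local Open Scope ring_scope.

Section LeadingMatrices.
Variable K : fieldType.
Implicit Types F : nat -> nat -> K.

Definition lead F n : 'M[K]_n := \matrix_(j < n, k < n) F j k.

Lemma leadE F n (j k : 'I_n) : lead F n j k = F j k.
Proof. exact: mxE. Qed.

Lemma lead_eq F G n :
  (forall j k, (j < n)%N -> (k < n)%N -> F j k = G j k) -> lead F n = lead G n.
Proof. by move=> FG; apply/matrixP => j k; rewrite !mxE FG. Qed.

Lemma lead_unit_tr F n :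
  lead F n \in unitmx -> lead (fun j k => F k j) n \in unitmx.
Proof.
suff -> : lead (fun j k => F k j) n = (lead F n)^T by rewrite unitmx_tr.
by apply/matrixP => j k; rewrite !mxE.
Qed.

Lemma unitmx_ker n (A : 'M[K]_n) :
  (forall x : 'rV_n, x *m A = 0 -> x = 0) -> A \in unitmx.
Proof.
move=> ker0; rewrite -row_free_unit -kermx_eq0; apply/eqP/row_matrixP => i.
by rewrite row0; apply: ker0; apply/sub_kermxP; exact: row_sub.
Qed.

Lemma lead_rows_free F n (y : 'I_n -> K) : lead F n \in unitmx ->
  (forall k : 'I_n, \sum_j y j * F j k = 0) -> forall j, y j = 0.
Proof.
move=> unitA comb0 j.
have : (\row_j y j) *m lead F n = 0.
  by apply/rowP => k; rewrite !mxE -[RHS](comb0 k); apply: eq_bigr => i _; rewrite !mxE.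
by move/(canRL (mulmxK unitA)); rewrite mul0mx => /rowP/(_ j); rewrite !mxE.
Qed.

Lemma lead_rows_solve F n (r : 'I_n -> K) : lead F n \in unitmx ->
  exists lam : 'I_n -> K, forall k : 'I_n, \sum_j lam j * F j k = r k.
Proof.
move=> unitA; exists (fun j => ((\row_k r k) *m invmx (lead F n)) 0 j) => k.
have /rowP/(_ k) := mulmxKV unitA (\row_k r k).
rewrite [X in _ = X -> _]mxE [X in X = _ -> _]mxE => <-.
by apply: eq_bigr => j _; rewrite leadE.
Qed.

Lemma lead_cols_free F n (y : 'I_n -> K) : lead F n \in unitmx ->
  (forall j : 'I_n, \sum_(k < n) F j k * y k = 0) -> forall k, y k = 0.
Proof.
move=> /lead_unit_tr unitA comb0; apply: (lead_rows_free (y := y) unitA) => j.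
by rewrite -[RHS](comb0 j); apply: eq_bigr => k _; rewrite mulrC.
Qed.

Lemma lead_cols_solve F n (r : 'I_n -> K) : lead F n \in unitmx ->
  exists mu : 'I_n -> K, forall j : 'I_n, \sum_(k < n) F j k * mu k = r j.
Proof.
move=> /lead_unit_tr/(lead_rows_solve r) [mu mu_sol]; exists mu => j.
by rewrite -mu_sol; apply: eq_bigr => k _; rewrite mulrC.
Qed.

(* Bordering: if the new row (F n k)_(k<n) is the combination lam of the old
   rows, the bordered matrix is invertible iff the Schur complement
   F n n - sum_j lam_j F j n is nonzero; we need the "if" direction. *)
Lemma lead_border_unitmx F n (lam : 'I_n -> K) : lead F n \in unitmx ->
  (forall k : 'I_n, F n k = \sum_j lam j * F j k) ->
  F n n != \sum_(j < n) lam j * F j n ->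
  lead F n.+1 \in unitmx.
Proof.
move=> unitA last_row pivot; apply: unitmx_ker => x xB0.
pose xl := x 0 ord_max.
have col (k : 'I_n.+1) :
    \sum_(j < n) x 0 (widen_ord (leqnSn n) j) * F j k + xl * F n k = 0.
  have /rowP/(_ k) := xB0; rewrite !mxE big_ord_recr /= leadE => eq0.
  by rewrite -[RHS]eq0; congr (_ + _); apply: eq_bigr => j _; rewrite leadE.
have shifted0 : forall j : 'I_n, x 0 (widen_ord (leqnSn n) j) + xl * lam j = 0.
  apply: (lead_rows_free unitA) => k; rewrite -[RHS](col (widen_ord (leqnSn n) k)).
  rewrite last_row mulr_sumr -big_split; apply: eq_bigr => j _ /=.
  by rewrite mulrDl mulrA.
have xl0 : xl = 0.
  have : xl * (F n n - \sum_(j < n) lam j * F j n) = 0.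
    rewrite -[RHS](col ord_max) mulrBr addrC mulr_sumr -sumrN; congr (_ + _).
    apply: eq_bigr => j _ /=.
    by rewrite -(addrK (xl * lam j) (x 0 _)) shifted0 sub0r mulrA mulNr.
  by move/eqP; rewrite mulf_eq0 subr_eq0 (negbTE pivot) orbF => /eqP.
apply/rowP => i; rewrite mxE; case: (unliftP ord_max i) => [j ->|->] //.
have -> : lift ord_max j = widen_ord (leqnSn n) j by apply: val_inj; exact: lift_max.
by have := shifted0 j; rewrite xl0 mul0r addr0.
Qed.

Lemma lead_border_unitmx_col F n (mu : 'I_n -> K) : lead F n \in unitmx ->
  (forall j : 'I_n, F j n = \sum_(k < n) F j k * mu k) ->
  F n n != \sum_(k < n) F n k * mu k ->
  lead F n.+1 \in unitmx.
Proof.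
move=> /lead_unit_tr unitA last_col pivot.
suff /lead_unit_tr : lead (fun j k => F k j) n.+1 \in unitmx by [].
apply: (lead_border_unitmx (lam := mu) unitA) => [k|].
  by rewrite last_col; apply: eq_bigr => j _; rewrite mulrC.
by apply: contra pivot => /eqP->; apply/eqP/eq_bigr => j _; rewrite mulrC.
Qed.

Lemma lead_last_pivot F n (v : 'I_n.+1 -> K) : lead F n \in unitmx ->
  (forall j : 'I_n.+1, \sum_(k < n.+1) F j k * v k = (j == ord_max)%:R) ->
  v ord_max != 0.
Proof.
move=> unitA sol; apply/eqP => vl0.
have v0 : forall k : 'I_n, v (widen_ord (leqnSn n) k) = 0.
  apply: (lead_cols_free unitA) => j.
  have := sol (widen_ord (leqnSn n) j); rewrite big_ord_recr /= vl0 mulr0 addr0 => ->.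
  by rewrite eqE /= ltn_eqF.
have := sol ord_max; rewrite eqxx big_ord_recr /= vl0 mulr0 addr0 big1 => [|k _].
  by move/eqP; rewrite eq_sym oner_eq0.
by rewrite v0 mulr0.
Qed.

Definition last_solution F n (k : 'I_n.+1) : K :=
  (invmx (lead F n.+1) *m delta_mx ord_max (0 : 'I_1)) k 0.
Arguments last_solution F n k : clear implicits.

Lemma last_solutionP F n : lead F n.+1 \in unitmx ->
  forall j : 'I_n.+1, \sum_(k < n.+1) F j k * last_solution F n k = (j == ord_max)%:R.
Proof.
move=> unitA j; have /matrixP/(_ j 0) := mulKVmx unitA (delta_mx ord_max (0 : 'I_1)).
by rewrite !mxE eqxx andbT => <-; apply: eq_bigr => k _; rewrite mxE.
Qed.

End LeadingMatrices.

Arguments last_solution {K} F n k.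

Section LinearFunctionals.
Variables (K : fieldType) (E : lmodType K).
Implicit Types h : E -> K.

(* A linear functional packaged as a {linear E -> K^o}, to reuse linear_sum etc. *)
Definition linear_of h (hL : linear_functional h) : {linear E -> K^o} :=
  HB.pack h (GRing.isLinear.Build K E K^o *:%R h hL).

Lemma lf_sum h (hL : linear_functional h) (I : finType) (P : pred I) (F : I -> E) :
  h (\sum_(i | P i) F i) = \sum_(i | P i) h (F i).
Proof. exact: (linear_sum (linear_of hL)). Qed.

Lemma lf_scale h (hL : linear_functional h) a x : h (a *: x) = a * h x.
Proof. exact: (linearZZ (linear_of hL)). Qed.

Lemma lf_comb (I : finType) (c : I -> K) (hs : I -> E -> K) :
  (forall i, linear_functional (hs i)) ->
  linear_functional (fun x => \sum_i c i * hs i x).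
Proof.
move=> hsL a x y; rewrite mulr_sumr -big_split; apply: eq_bigr => i _ /=.
by rewrite hsL mulrDr mulrCA.
Qed.

Lemma lf_agree_on_basis (u : nat -> E) h1 h2 :
  (forall x, exists n (c : nat -> K), x = \sum_(i < n) c i *: u i) ->
  linear_functional h1 -> linear_functional h2 ->
  (forall i, h1 (u i) = h2 (u i)) -> forall x, h1 x = h2 x.
Proof.
move=> spans h1L h2L agree x; have [n [c ->]] := spans x.
by rewrite (lf_sum h1L) (lf_sum h2L); apply: eq_bigr => i _; rewrite !lf_scale ?agree.
Qed.

End LinearFunctionals.

(* A combination sum_j lam_j w_(s j) indexed by 'I_n is rewritten as a combination
   of w_0, ..., w_(N-1), so that independence of prefixes of w can be applied. *)
Section Reindexing.
Variable K : fieldType.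

Definition coef n (s : 'I_n -> nat) (lam : 'I_n -> K) (i : nat) : K :=
  \sum_(j | s j == i) lam j.

Lemma coef_notin n (s : 'I_n -> nat) (lam : 'I_n -> K) (i : nat) :
  (forall j, s j != i) -> coef s lam i = 0.
Proof. by move=> i_new; apply: big_pred0 => j; apply/negbTE. Qed.

Lemma delta_minus_comb (V : lmodType K) n (s : 'I_n -> nat) (lam : 'I_n -> K)
    (w : nat -> V) (a N : nat) :
  (a < N)%N -> (forall j, s j < N)%N ->
  w a - \sum_j lam j *: w (s j) =
  \sum_(i < N) ((i == a :> nat)%:R - coef s lam i) *: w i.
Proof.
move=> aN sN; under [RHS]eq_bigr do rewrite scalerBl.
rewrite big_split sumrN /=; congr (_ - _).
  rewrite (bigD1 (Ordinal aN)) //= eqxx scale1r big1 ?addr0 // => i.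
  by rewrite -val_eqE /= => /negbTE->; rewrite scale0r.
under [RHS]eq_bigr do rewrite /coef scaler_suml big_mkcond.
rewrite exchange_big /=; apply: eq_bigr => j _.
by rewrite -big_mkcond /= (big_pred1 (Ordinal (sN j))).
Qed.

Lemma large_index n (s : 'I_n -> nat) (a : nat) :
  exists N, (a < N)%N /\ (forall j, s j < N)%N.
Proof.
exists (maxn a (\max_j s j)).+1; split=> [|j]; rewrite ltnS ?leq_maxl //.
exact: leq_trans (leq_bigmax j) (leq_maxr _ _).
Qed.

End Reindexing.

Lemma ex_minnT (P : pred nat) (e : exists n, P n) : P (ex_minn e).
Proof. by case: ex_minnP. Qed.

Lemma fresh_exists (s : seq nat) : exists a, a \notin s.
Proof.
exists (\max_(i <- s) i).+1; apply/negP => /(@leq_bigmax_seq _ _ xpredT id).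
by rewrite ltnNge => /(_ isT)/negP.
Qed.

Definition fresh (s : seq nat) : nat := ex_minn (fresh_exists s).

Lemma fresh_notin (s : seq nat) : fresh s \notin s.
Proof. exact: (ex_minnT (fresh_exists s)). Qed.

Lemma mem_rcons_fresh (s : seq nat) (a : nat) :
  (forall x, (x < a)%N -> x \in s) -> a \in rcons s (fresh s).
Proof.
move=> below; rewrite mem_rcons in_cons; case a_in: (a \in s); rewrite ?orbT //.
rewrite orbF /fresh; case: ex_minnP => m m_new m_min.
by rewrite eqn_leq m_min ?a_in // andbT leqNgt; exact: contra (below m) m_new.
Qed.

Lemma mem_mkseq_mono (g : nat -> nat) (m n x : nat) :
  (m <= n)%N -> x \in mkseq g m -> x \in mkseq g n.
Proof.
move=> le_mn /mapP [i]; rewrite mem_iota => /andP [_ i_lt] ->.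
by apply: map_f; rewrite mem_iota (leq_trans i_lt le_mn).
Qed.

Lemma inj_surj_bijective (g : nat -> nat) :
  injective g -> (forall y, exists x, g x = y) -> bijective g.
Proof.
move=> inj_g surj_g.
have surj_g' y : exists x, g x == y by have [x <-] := surj_g y; exists x.
by exists (fun y => ex_minn (surj_g' y)) => [x|y]; case: ex_minnP => m /eqP // /inj_g.
Qed.

(* An injective enumeration g of nat that chooses the least unused number at every
   step of a fixed parity is a bijection: a is enumerated by step 2a+2. *)
Lemma alternating_fresh_bijective (g : nat -> nat) (b : bool) :
  (forall n, uniq (mkseq g n)) ->
  (forall n, odd n = b -> g n = fresh (mkseq g n)) ->
  bijective g.
Proof.
move=> uniq_g fresh_g; apply: inj_surj_bijective => [i j|a].
  by apply: (mkseq_uniqP _ _ (uniq_g (maxn i j).+1)); rewrite inE ltnS ?leq_maxl ?leq_maxr.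
suff /mapP [i _ ->] : a \in mkseq g a.*2.+2 by exists i.
elim/ltn_ind: a => a IH; set n := a.*2 + b.
have below x : (x < a)%N -> x \in mkseq g n.
  move=> x_lt; apply: mem_mkseq_mono (IH x x_lt).
  by rewrite -doubleS (leq_trans _ (leq_addr b _)) // leq_double.
apply: (@mem_mkseq_mono _ n.+1); first by rewrite ltnS /n -addn1 leq_add2l leq_b1.
by rewrite mkseqS fresh_g; [apply: mem_rcons_fresh | rewrite /n oddD odd_double oddb].
Qed.

Section BackAndForth.
Variables (K : fieldType) (E : lmodType K) (u : nat -> E) (f : nat -> E -> K).
Hypothesis hf : forall n : nat, linear_functional (f n).
Hypothesis hu : hamel_basis u.
Hypothesis hind : lin_indep_functionals f.
Hypothesis hsep : separates_points f.

Lemma basis_vector_outside_span n (s : 'I_n -> nat) (mu : 'I_n -> K) (b : nat) :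
  (forall k, s k != b) -> u b != \sum_k mu k *: u (s k).
Proof.
move=> b_new; apply/eqP => /eqP; rewrite -subr_eq0.
have [N [bN sN]] := large_index s b.
rewrite (delta_minus_comb _ _ bN sN) => /eqP comb0.
have := hu.1 N (fun i => (i == b)%:R - coef s mu i) comb0 b bN.
by rewrite eqxx coef_notin // subr0 => /eqP; rewrite oner_eq0.
Qed.

Lemma functional_outside_span n (s : 'I_n -> nat) (lam : 'I_n -> K) (a : nat) :
  (forall j, s j != a) -> ~ (forall x, f a x = \sum_j lam j * f (s j) x).
Proof.
move=> a_new same; have [N [aN sN]] := large_index s a.
have comb0 x : \sum_(i < N) ((i == a :> nat)%:R - coef s lam i) * f i x = 0.
  rewrite -[RHS](subrr (f a x)) {2}same.
  exact: (esym (delta_minus_comb (V := K^o) lam (fun i => f i x) aN sN)).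
have := @hind N (fun i => (i == a)%:R - coef s lam i) comb0 a aN.
by rewrite eqxx coef_notin // subr0 => /eqP; rewrite oner_eq0.
Qed.

Definition pairing (sa sb : seq nat) (j k : nat) : K :=
  f (nth 0%N sa j) (u (nth 0%N sb k)).

Definition admissible (sa sb : seq nat) : bool :=
  [&& size sb == size sa, uniq sa, uniq sb
    & lead (pairing sa sb) (size sa) \in unitmx].

Lemma admissible_nil : admissible [::] [::].
Proof. by rewrite /admissible /= unitmxE det_mx00 unitr1. Qed.

Section PairingRcons.
Variables (sa sb : seq nat) (a b : nat).
Hypothesis size_sb : size sb = size sa.
Local Notation F := (pairing (rcons sa a) (rcons sb b)).

Lemma pairing_rcons_old (j k : nat) : (j < size sa)%N -> (k < size sa)%N ->
  F j k = pairing sa sb j k.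
Proof. by move=> j_lt k_lt; rewrite /pairing !nth_rcons size_sb j_lt k_lt. Qed.

Lemma pairing_rcons_row (k : nat) : (k < size sa)%N ->
  F (size sa) k = f a (u (nth 0%N sb k)).
Proof. by move=> k_lt; rewrite /pairing !nth_rcons size_sb k_lt ltnn eqxx. Qed.

Lemma pairing_rcons_col (j : nat) : (j < size sa)%N ->
  F j (size sa) = f (nth 0%N sa j) (u b).
Proof. by move=> j_lt; rewrite /pairing !nth_rcons size_sb j_lt ltnn eqxx. Qed.

Lemma pairing_rcons_corner : F (size sa) (size sa) = f a (u b).
Proof. by rewrite /pairing !nth_rcons size_sb ltnn eqxx. Qed.

Lemma lead_pairing_rcons : lead F (size sa) = lead (pairing sa sb) (size sa).
Proof. exact: lead_eq pairing_rcons_old. Qed.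

End PairingRcons.

Lemma admissible_rcons (sa sb : seq nat) (a b : nat) : admissible sa sb ->
  a \notin sa -> b \notin sb ->
  lead (pairing (rcons sa a) (rcons sb b)) (size sa).+1 \in unitmx ->
  admissible (rcons sa a) (rcons sb b).
Proof.
case/and4P => /eqP size_sb uniq_sa uniq_sb _ a_new b_new unitB.
by rewrite /admissible !size_rcons size_sb eqxx !rcons_uniq a_new b_new uniq_sa uniq_sb unitB.
Qed.

(* Extension by a new functional index a: take lam expressing the row of f_a through
   the old rows and a basis vector u_b on which f_a - sum_j lam_j f_(sa_j) is nonzero. *)
Lemma extend_rows (sa sb : seq nat) (a : nat) : admissible sa sb -> a \notin sa ->
  exists b, admissible (rcons sa a) (rcons sb b).
Proof.
move=> adm a_new; case/and4P: (adm) => /eqP size_sb _ _ unitA.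
have [lam lam_sol] := lead_rows_solve (fun k => f a (u (nth 0%N sb k))) unitA.
pose comb x := \sum_j lam j * f (nth 0%N sa j) x.
have [b new_b] : exists b, f a (u b) != comb (u b).
  have a_fresh (j : 'I_(size sa)) : nth 0%N sa j != a.
    by apply: contraNneq a_new => <-; exact: mem_nth.
  apply: NNPP => none; apply: (functional_outside_span (lam := lam) a_fresh).
  apply: (lf_agree_on_basis hu.2 (hf a) (lf_comb _ (fun j => hf _))) => i.
  by apply/eqP/negPn/negP => ne; apply: none; exists i.
have b_new : b \notin sb.
  apply/negP => /(nthP 0%N) [k k_lt nth_k]; rewrite size_sb in k_lt.
  by move: new_b; rewrite -nth_k -(lam_sol (Ordinal k_lt)) eqxx.
exists b; apply: admissible_rcons => //.
apply: (lead_border_unitmx (lam := lam)).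
- by rewrite lead_pairing_rcons.
- move=> k; rewrite pairing_rcons_row // -lam_sol.
  by apply: eq_bigr => j _; rewrite pairing_rcons_old.
- rewrite pairing_rcons_corner //; apply: contra new_b => /eqP->.
  by apply/eqP/eq_bigr => j _; rewrite pairing_rcons_col.
Qed.

(* Extension by a new vector index b: take mu expressing the column of u_b through
   the old columns and a functional f_a separating u_b from sum_k mu_k u_(sb_k). *)
Lemma extend_cols (sa sb : seq nat) (b : nat) : admissible sa sb -> b \notin sb ->
  exists a, admissible (rcons sa a) (rcons sb b).
Proof.
move=> adm b_new; case/and4P: (adm) => /eqP size_sb _ _ unitA.
have [mu mu_sol] := lead_cols_solve (fun j => f (nth 0%N sa j) (u b)) unitA.
have b_fresh (k : 'I_(size sa)) : nth 0%N sb k != b.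
  by apply: contraNneq b_new => <-; apply: mem_nth; rewrite size_sb.
have [a new_a] : exists a, f a (u b) != \sum_k mu k * f a (u (nth 0%N sb k)).
  have /eqP/hsep [a ne] := basis_vector_outside_span mu b_fresh.
  exists a; apply/eqP => same; apply: ne; rewrite same (lf_sum (hf a)).
  by apply: eq_bigr => k _; rewrite (lf_scale (hf a)).
have a_new : a \notin sa.
  apply/negP => /(nthP 0%N) [j j_lt nth_j]; move: new_a.
  rewrite -nth_j -(mu_sol (Ordinal j_lt)) /pairing.
  by under [X in X != _]eq_bigr do rewrite mulrC; rewrite eqxx.
exists a; apply: admissible_rcons => //.
apply: (lead_border_unitmx_col (mu := mu)).
- by rewrite lead_pairing_rcons.
- move=> j; rewrite pairing_rcons_col // -mu_sol.
  by apply: eq_bigr => k _; rewrite pairing_rcons_old.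
- rewrite pairing_rcons_corner //; apply: contra new_a => /eqP->.
  by apply/eqP/eq_bigr => k _; rewrite pairing_rcons_row // mulrC.
Qed.

Definition chain : Type := {p : seq nat * seq nat | admissible p.1 p.2}.

Definition rows (c : chain) : seq nat := (sval c).1.
Definition cols (c : chain) : seq nat := (sval c).2.

Definition grow_rows (c : chain) : chain :=
  let e := extend_rows (svalP c) (fresh_notin (rows c)) in
  exist _ (rcons (rows c) (fresh (rows c)), rcons (cols c) (ex_minn e)) (ex_minnT e).

Definition grow_cols (c : chain) : chain :=
  let e := extend_cols (svalP c) (fresh_notin (cols c)) in
  exist _ (rcons (rows c) (ex_minn e), rcons (cols c) (fresh (cols c))) (ex_minnT e).

Fixpoint chain_at (n : nat) : chain :=
  if n is m.+1 then (if odd m then grow_cols else grow_rows) (chain_at m)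
  else exist _ ([::], [::]) admissible_nil.

Definition alpha (n : nat) : nat := last 0%N (rows (chain_at n.+1)).
Definition beta (n : nat) : nat := last 0%N (cols (chain_at n.+1)).

Lemma chain_grows n :
  (exists x, rows (chain_at n.+1) = rcons (rows (chain_at n)) x) /\
  (exists y, cols (chain_at n.+1) = rcons (cols (chain_at n)) y).
Proof. by rewrite /=; case: odd; split; eexists. Qed.

Lemma rows_chain n : rows (chain_at n) = mkseq alpha n.
Proof.
elim: n => // n IH; have [[x grow] _] := chain_grows n.
by rewrite mkseqS -IH /alpha grow last_rcons.
Qed.

Lemma cols_chain n : cols (chain_at n) = mkseq beta n.
Proof.
elim: n => // n IH; have [_ [y grow]] := chain_grows n.
by rewrite mkseqS -IH /beta grow last_rcons.
Qed.

Lemma admissible_prefix n : admissible (mkseq alpha n) (mkseq beta n).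
Proof. by rewrite -rows_chain -cols_chain; exact: (svalP (chain_at n)). Qed.

Lemma alpha_fresh n : odd n = false -> alpha n = fresh (mkseq alpha n).
Proof. by move=> n_even; rewrite -rows_chain /alpha /= n_even last_rcons. Qed.

Lemma beta_fresh n : odd n = true -> beta n = fresh (mkseq beta n).
Proof. by move=> n_odd; rewrite -cols_chain /beta /= n_odd last_rcons. Qed.

Lemma alpha_bijective : bijective alpha.
Proof.
apply: (alternating_fresh_bijective _ alpha_fresh) => n.
by case/and4P: (admissible_prefix n).
Qed.

Lemma beta_bijective : bijective beta.
Proof.
apply: (alternating_fresh_bijective _ beta_fresh) => n.
by case/and4P: (admissible_prefix n).
Qed.

Definition gram (j k : nat) : K := f (alpha j) (u (beta k)).

Lemma gram_unitmx n : lead gram n \in unitmx.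
Proof.
case/and4P: (admissible_prefix n) => _ _ _; rewrite size_mkseq.
by rewrite (lead_eq (G := gram)) // => j k j_lt k_lt; rewrite /pairing !nth_mkseq.
Qed.

Definition dual_coef (m k : nat) : K := last_solution gram k (inord m).

Lemma dual_coef_diag k : dual_coef k k != 0.
Proof.
rewrite /dual_coef; have -> : inord k = ord_max :> 'I_k.+1 by apply: val_inj; rewrite /= inordK.
exact: lead_last_pivot (gram_unitmx k) (last_solutionP (gram_unitmx k.+1)).
Qed.

Lemma dual_coef_eval j k : (j <= k)%N ->
  f (alpha j) (\sum_(m < k.+1) dual_coef m k *: u (beta m)) = (j == k)%:R.
Proof.
move=> j_le; rewrite (lf_sum (hf _)).
transitivity (\sum_(m < k.+1) gram (inord j : 'I_k.+1) m * last_solution gram k m).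
  by apply: eq_bigr => m _; rewrite (lf_scale (hf _)) mulrC /dual_coef inord_val inordK.
by rewrite last_solutionP ?gram_unitmx // -val_eqE /= inordK.
Qed.

End BackAndForth.

Unset Implicit Arguments.

Theorem lemma3p4 (K : fieldType) (E : lmodType K) (u : nat -> E)
    (f : nat -> E -> K)
    (hf : forall n : nat, linear_functional (f n))
    (hu : hamel_basis u)
    (hind : lin_indep_functionals f)
    (hsep : separates_points f) :
  exists alpha beta : nat -> nat,
    bijective alpha /\ bijective beta /\
    (forall n : nat,
        (\matrix_(j < n, k < n) f (alpha j) (u (beta k))) \in unitmx) /\
    exists c : nat -> nat -> K,
      (forall j : nat, c j j != 0) /\
      (forall j : nat,
          f (alpha j) (\sum_(m < j.+1) c m j *: u (beta m)) = 1) /\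
      (forall j k : nat, (j < k)%N ->
          f (alpha j) (\sum_(m < k.+1) c m k *: u (beta m)) = 0).
Proof.
exists (alpha hf hu hind hsep), (beta hf hu hind hsep).
split; first exact: alpha_bijective.
split; first exact: beta_bijective.
split; first exact: gram_unitmx.
exists (dual_coef hf hu hind hsep); split; first exact: dual_coef_diag.
split=> [j | j k lt_jk]; first by rewrite dual_coef_eval // eqxx.
by rewrite dual_coef_eval ?(ltnW lt_jk) // ltn_eqF.
Qed.
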